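(* The relation $\preceq_{d+1}$ is a partial order on the set of simplices on $\gamma_d$.
   Context: $\gamma_d=\{(t,t^2,\dots,t^d):t\in\mathbb{R}\}$. A simplex on $\gamma_d$ is a finite subset $\sigma\subseteq\gamma_d$ with $|\sigma|\le d+1$, identified with $\mathrm{conv}(\sigma)$. Simplices overlap in $\mathbb{R}^d$ if $\mathrm{conv}(\sigma)\cap\mathrm{conv}(\tau)\supsetneq\mathrm{conv}(\sigma\cap\tau)$. For $\sigma=\{\gamma_d(t_1),\dots,\gamma_d(t_k)\}$ the lifting is $\hat\sigma=\{\gamma_{d+1}(t_i)\}$ and the height function $h_\sigma:\mathrm{conv}(\sigma)\to\mathbb{R}$ assigns to $p$ the last coordinate of the point of $\mathrm{conv}(\hat\sigma)$ projecting to $p$. Write $\sigma<_{d+1}\tau$ if $\sigma,\tau$ overlap in $\mathbb{R}^d$ and $h_\sigma\le h_\tau$ on $\mathrm{conv}(\sigma)\cap\mathrm{conv}(\tau)$. Define $\sigma\preceq_{d+1}\tau$ if $\sigma=\tau$ or there exist $k\ge1$ and simplices $\sigma=\sigma_0<_{d+1}\sigma_1<_{d+1}\dots<_{d+1}\sigma_k=\tau$ on $\gamma_d$. *)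

From HB Require Import structures.
From mathcomp Require Import all_boot all_order all_algebra.
From mathcomp Require Import finmap.
From mathcomp Require Import boolp classical_sets reals.
From Stdlib Require Import Relations.

Unset Implicit Arguments.
Unset Strict Implicit.
Unset Printing Implicit Defensive.

Import Order.TTheory GRing.Theory Num.Theory.
Local Open Scope ring_scope.
Local Open Scope classical_set_scope.

Section Defs.
Variable R : realType.

Definition gamma (n : nat) (t : R) : 'rV[R]_n := \row_(i < n) t ^+ i.+1.

(* A simplex on gamma_d is given by its finite set of parameters T
   (sigma = {gamma_d(t) : t in T}); gamma_d is injective for d >= 1. *)
Definition is_simplex (d : nat) (T : {fset R}) : Prop := (#|` T| <= d.+1)%N.

Definition conv_pts (n : nat) (f : R -> 'rV[R]_n) (T : {fset R}) : set 'rV[R]_n :=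
  [set p | exists l : R -> R,
     (forall t, t \in T -> 0 <= l t) /\
     \sum_(t <- T) l t = 1 /\
     p = \sum_(t <- T) l t *: f t].

Definition conv_simplex (d : nat) (T : {fset R}) := conv_pts d (gamma d) T.
Definition conv_lift (d : nat) (T : {fset R}) := conv_pts d.+1 (gamma d.+1) T.

Definition proj_last (d : nat) (q : 'rV[R]_d.+1) : 'rV[R]_d :=
  \row_(i < d) q 0 (widen_ord (leqnSn d) i).
Definition last_coord (d : nat) (q : 'rV[R]_d.+1) : R := q 0 ord_max.

Definition is_height (d : nat) (T : {fset R}) (p : 'rV[R]_d) (y : R) : Prop :=
  exists q : 'rV[R]_d.+1, conv_lift d T q /\ @proj_last d q = p /\ @last_coord d q = y.

Definition overlap (d : nat) (S T : {fset R}) : Prop :=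
  conv_simplex d (S `&` T)%fset `<` (conv_simplex d S `&` conv_simplex d T).

Definition lt_lift (d : nat) (S T : {fset R}) : Prop :=
  overlap d S T /\
  forall p, conv_simplex d S p -> conv_simplex d T p ->
    forall y z, is_height d S p y -> is_height d T p z -> y <= z.

Definition lt_lift_simp (d : nat) (S T : {fset R}) : Prop :=
  is_simplex d S /\ is_simplex d T /\ lt_lift d S T.

Definition prec_lift (d : nat) (S T : {fset R}) : Prop :=
  S = T \/ clos_trans _ (lt_lift_simp d) S T.

End Defs.

From HB Require Import structures.
From mathcomp Require Import all_boot all_order all_algebra.
From mathcomp Require Import finmap.
From mathcomp Require Import boolp classical_sets reals.
From mathcomp Require Import lra zify.
From Stdlib Require Import Relation_Operators.

(* For a finite set S of parameters let [fsign S y] be 0 if y is not in S, and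
   (-1)^k if y is in S and exactly k elements of S lie above y.  If
   sigma <_{d+1} tau, then fsign sigma < fsign tau at the largest point where
   sigma and tau differ.  Comparing functions at the top point where they
   differ is a strict order, so the transitive closure of <_{d+1} is acyclic,
   which is antisymmetry; reflexivity and transitivity hold by definition.

   Why the comparison at that top point x goes the right way: a point of
   conv sigma /\ conv tau outside conv (sigma /\ tau) gives weights nu,
   positive only on sigma and negative only on tau, that annihilate all
   polynomials of degree <= d.  By a Descartes-type count of sign changes,
   nu alternates in sign along some chain of d+2 points of its support.  If
   x had the wrong parity, the common points above x, followed by x and by
   the part of that chain below x, would give d+2 points t_0 > ... > t_{d+1}
   lying alternately in sigma and tau, starting in sigma.  The divided
   difference weights 1 / prod_{j <> i} (t_i - t_j) alternate in sign,
   annihilate polynomials of degree <= d and are positive on t^{d+1}; their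
   positive and negative parts give a common point of conv sigma and
   conv tau over which the lift of sigma lies strictly above that of tau. *)

Set Implicit Arguments.
Unset Strict Implicit.
Unset Printing Implicit Defensive.
Import Order.TTheory GRing.Theory Num.Theory.

Section TopLex.
Local Open Scope order_scope.
Context {dT dV : Order.disp_t} {T : orderType dT} {V : porderType dV}.

Definition lex_lt (f g : T -> V) : Prop :=
  exists x, f x < g x /\ forall y, x < y -> f y = g y.

Lemma lex_lt_irr f : ~ lex_lt f f.
Proof. by case=> x []; rewrite ltxx. Qed.

Lemma lex_lt_trans f g h : lex_lt f g -> lex_lt g h -> lex_lt f h.
Proof.
move=> [x [fgx fgE]] [y [ghy ghE]].
have [xy|yx|exy] := ltgtP x y.
- exists y; split; first by rewrite fgE.
  by move=> z yz; rewrite fgE ?ghE // (lt_trans xy yz).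
- exists x; split; first by rewrite -ghE.
  by move=> z xz; rewrite fgE ?ghE // (lt_trans yx xz).
- subst y; exists x; split; first exact: lt_trans fgx ghy.
  by move=> z xz; rewrite fgE ?ghE.
Qed.

End TopLex.

Section Alternates.
Variables (T : eqType) (P : bool -> pred T).

Fixpoint alternates (b : bool) (s : seq T) : bool :=
  if s is x :: s' then P b x && alternates (~~ b) s' else true.

Lemma alternates_cat b s1 s2 :
  alternates b (s1 ++ s2) = alternates b s1 && alternates (b (+) odd (size s1)) s2.
Proof.
elim: s1 b => [|x s1 IH] b /=; first by rewrite addbF.
by rewrite IH andbA addNb -addbN.
Qed.

Lemma alternates_drop b s m : alternates b s -> alternates (b (+) odd m) (drop m s).
Proof.
have [ms|sm] := leqP m (size s); last by rewrite drop_oversize // ltnW.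
by rewrite -{1}(cat_take_drop m s) alternates_cat size_takel // => /andP[].
Qed.

Lemma alternates_take b s m : alternates b s -> alternates b (take m s).
Proof. by rewrite -{1}(cat_take_drop m s) alternates_cat => /andP[]. Qed.

Lemma alternates_both b s : {in s, forall y, P true y && P false y} -> alternates b s.
Proof.
elim: s b => //= x s IH b sP; rewrite IH ?andbT => [|y ys]; last by rewrite sP // inE ys orbT.
by have /andP[] := sP x (mem_head x s); case: b.
Qed.

Lemma alternates_mem b s y : alternates b s -> y \in s -> exists c, P c y.
Proof.
elim: s b => //= x s IH b /andP[Px alt]; rewrite inE => /predU1P[->|]; first by exists b.
exact: IH alt.
Qed.

End Alternates.

Lemma alternates_sub (T : eqType) (P Q : bool -> pred T) b (s : seq T) :
  {in s, forall y c, P c y -> Q c y} -> alternates P b s -> alternates Q b s.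
Proof.
elim: s b => //= x s IH b PQ /andP[Px alt]; rewrite PQ ?mem_head //=.
by apply: IH alt => y ys; apply: PQ; rewrite inE ys orbT.
Qed.

Lemma alternates_flip (T : eqType) (P : bool -> pred T) b (s : seq T) :
  alternates (fun c => P (~~ c)) b s = alternates P (~~ b) s.
Proof. by elim: s b => //= x s IH b; rewrite IH. Qed.

Lemma alternatesI (T : eqType) (P Q : bool -> pred T) b (s : seq T) :
  alternates P b s -> alternates Q b s -> alternates (fun c y => P c y && Q c y) b s.
Proof. by elim: s b => //= x s IH b /andP[-> /IH altP] /andP[-> /altP]. Qed.

Local Open Scope ring_scope.

Section MomentCurve.
Variable R : realType.
Implicit Types (S T U : {fset R}) (s ps ys C N : seq R) (x y : R) (nu w l : R -> R).

Let gtr_trans : transitive (>%R : rel R) := rev_trans lt_trans.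
Let gtr_irr : irreflexive (>%R : rel R) := @ltxx _ R.

(** * Sign changes of weights annihilating low-degree polynomials *)

Definition has_sign (b : bool) (v : R) : bool := if b then 0 < v else v < 0.

Lemma has_sign_gt0 b u v : has_sign b u -> (0 < u * v) = has_sign b v.
Proof. by rewrite /has_sign; case: b => hu; [rewrite pmulr_rgt0 | rewrite nmulr_rgt0]. Qed.

Lemma has_sign_lt0 b u v : has_sign b u -> (u * v < 0) = has_sign (~~ b) v.
Proof. by rewrite /has_sign; case: b => hu; [rewrite pmulr_rlt0 | rewrite nmulr_rlt0]. Qed.

Lemma has_sign_nmull b u v : u < 0 -> has_sign b (u * v) = has_sign (~~ b) v.
Proof. by rewrite /has_sign; case: b => hu; [rewrite nmulr_rgt0 | rewrite nmulr_rlt0]. Qed.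

Lemma has_signN b v : v != 0 -> has_sign (~~ b) v = ~~ has_sign b v.
Proof. by rewrite /has_sign; case: b; case: ltrgt0P. Qed.

Lemma has_signV b v : has_sign b v^-1 = has_sign b v.
Proof. by rewrite /has_sign; case: b; rewrite ?invr_gt0 ?invr_lt0. Qed.

Lemma has_sign_neq0 b v : has_sign b v -> v != 0.
Proof. by rewrite /has_sign; case: b => [/gt_eqF|/lt_eqF] ->. Qed.

Lemma has_sign_inj b c v : has_sign b v -> has_sign c v -> b = c.
Proof.
by rewrite /has_sign; case: b; case: c => // v1 v2; have := lt_trans v1 v2; rewrite ltxx.
Qed.

Definition moment s w (k : nat) : R := \sum_(y <- s) w y * y ^+ k.

Lemma moment0 s w : moment s w 0 = \sum_(y <- s) w y.
Proof. by apply: eq_bigr => y _; rewrite expr0 mulr1. Qed.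

Lemma momentB s (u v : R -> R) k :
  moment s (fun y => u y - v y) k = moment s u k - moment s v k.
Proof. by rewrite /moment -sumrB; apply: eq_bigr => y _; rewrite mulrBl. Qed.

Lemma moment_divl s w c k : moment s (fun y => w y / c) k = moment s w k / c.
Proof. by rewrite /moment mulr_suml; apply: eq_bigr => y _; rewrite mulrAC. Qed.

Lemma moment_sub s1 s2 w : uniq s1 -> uniq s2 -> {subset s1 <= s2} ->
  {in s2, forall y, y \notin s1 -> w y = 0} -> moment s2 w =1 moment s1 w.
Proof.
move=> u1 u2 s12 w0 k; rewrite /moment (bigID (mem s1)) /= [X in _ + X]big1_seq ?addr0.
  rewrite -big_filter; apply/perm_big/uniq_perm; rewrite ?filter_uniq // => y.
  by rewrite mem_filter andb_idr //; apply: s12.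
by move=> y /andP[y1 y2]; rewrite w0 ?mul0r.
Qed.

Lemma moment_fsub S U w : (S `<=` U)%fset ->
  {in U, forall y, y \notin S -> w y = 0} -> moment U w =1 moment S w.
Proof. by move=> /fsubsetP; apply: moment_sub; apply: fset_uniq. Qed.

Lemma moment_poly s w n (P : {poly R}) :
  (forall k, (k <= n)%N -> moment s w k = 0) -> (size P <= n.+1)%N ->
  \sum_(y <- s) w y * P.[y] = 0.
Proof.
move=> mom0 szP; under eq_bigr do rewrite (horner_coef_wide _ szP) mulr_sumr.
rewrite exchange_big big1 //= => i _; under eq_bigr do rewrite mulrCA.
by rewrite -mulr_sumr -/(moment s w i) mom0 ?mulr0 // -ltnS.
Qed.

Lemma horner_mul_subX_lt (P : {poly R}) a r y : y < r ->
  (0 < a * (P * (r%:P - 'X)).[y]) = (0 < a * P.[y]).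
Proof.
by move=> yr; rewrite hornerM hornerD hornerN hornerC hornerX mulrA pmulr_lgt0 // subr_gt0.
Qed.

Lemma horner_mul_subX_gt (P : {poly R}) a r z : r < z ->
  (0 < a * (P * (r%:P - 'X)).[z]) = (a * P.[z] < 0).
Proof.
by move=> rz; rewrite hornerM hornerD hornerN hornerC hornerX mulrA nmulr_lgt0 // subr_lt0.
Qed.

(* The clause on the head h is only there to carry the induction. *)
Lemma sign_chain_poly nu ps : sorted >%R ps ->
  exists ys (e : bool) (P : {poly R}),
  [/\ subseq ys ps, alternates (fun b y => has_sign b (nu y)) e ys,
      (size P <= size ys)%N, {in ps, forall y, nu y != 0 -> 0 < nu y * P.[y]} &
      if ys is h :: _ then {in ps, forall y, nu y != 0 -> y <= h} /\
                           (forall z, h <= z -> 0 < nu h * P.[z])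
      else True].
Proof.
elim: ps => [_|x ps IH] /=; first by exists [::], true, 0; rewrite size_poly0.
rewrite (path_sortedE gtr_trans) => /andP[/allP psx /IH{IH}].
move=> [ys [e [P [sub alt szP pos top]]]].
have [nx0|nxn0] := eqVneq (nu x) 0.
  exists ys, e, P; split => //.
  - exact: subseq_trans sub (subseq_cons ps x).
  - by move=> y; rewrite inE => /predU1P[->|/pos//]; rewrite nx0 eqxx.
  case: ys {sub alt szP} top => // h t [htop hpos]; split => // y.
  by rewrite inE => /predU1P[->|/htop//]; rewrite nx0 eqxx.
have xtop : {in x :: ps, forall y, nu y != 0 -> y <= x}.
  by move=> y; rewrite inE => /predU1P[->//|/psx/ltW].
case: ys sub alt szP top => [|h t] sub alt szP top.
  have P0 : P = 0 by apply/eqP; rewrite -size_poly_eq0 -leqn0.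
  have sq z : 0 < nu x * (nu x)%:P.[z] by rewrite hornerC -expr2 exprn_even_gt0.
  exists [:: x], (0 < nu x), (nu x)%:P; split => //.
  - by rewrite /= eqxx sub0seq.
  - by rewrite /= andbT /has_sign; move: nxn0; case: ltrgt0P.
  - by rewrite size_polyC leq_b1.
  move=> y; rewrite inE => /predU1P[-> _|/pos]; first exact: sq.
  by rewrite P0 horner0 mulr0 ltxx => /[apply].
move: alt => /= /andP[sh alt]; case: top => [htop hpos].
have hx : h < x by apply/psx/(mem_subseq sub)/mem_head.
have Pge z : h <= z -> has_sign e P.[z] by move=> hz; rewrite -(has_sign_gt0 _ sh) hpos.
have [sx|nsx] := boolP (has_sign e (nu x)).
  exists (x :: t), e, P; split => //.
  - by rewrite /= eqxx (subseq_trans (subseq_cons t h)).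
  - by rewrite /= sx.
  - move=> y; rewrite inE => /predU1P[-> _|/pos//].
    by rewrite (has_sign_gt0 _ sx) Pge // ltW.
  by split => // z xz; rewrite (has_sign_gt0 _ sx) Pge // (le_trans (ltW hx) xz).
have sx : has_sign (~~ e) (nu x) by rewrite has_signN.
set r := (x + h) / 2; have hr : h < r by rewrite /r; lra.
have xr : r < x by rewrite /r; lra.
have sgx z : x <= z -> 0 < nu x * (P * (r%:P - 'X)).[z].
  move=> xz; rewrite horner_mul_subX_gt ?(lt_le_trans xr) //.
  by rewrite (has_sign_lt0 _ sx) negbK Pge // (le_trans (ltW hx) xz).
exists [:: x, h & t], (~~ e), (P * (r%:P - 'X)); split => //.
- by rewrite /= eqxx.
- by rewrite /= sx negbK sh.
- rewrite (leq_trans (size_polyMleq _ _)) // -opprB size_opp size_XsubC addn2.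
  exact: szP.
- move=> y; rewrite inE => /predU1P[-> _|yps ny]; first exact: sgx.
  by rewrite horner_mul_subX_lt ?pos // (le_lt_trans (htop y yps ny)).
Qed.

Lemma sign_chain_long nu ps n : sorted >%R ps ->
  (forall k, (k <= n)%N -> moment ps nu k = 0) -> has (fun y => nu y != 0) ps ->
  exists ys (e : bool),
    [/\ subseq ys ps, alternates (fun b y => has_sign b (nu y)) e ys & (n.+2 <= size ys)%N].
Proof.
move=> sps mom0 /hasP[y0 y0ps ny0].
have [ys [e [P [sub alt szP pos _]]]] := sign_chain_poly nu sps.
exists ys, e; split => //; rewrite ltnNge; apply/negP => szys.
have /eqP := moment_poly mom0 (leq_trans szP szys); apply/negP.
rewrite big_seq psumr_neq0 => [|y yps]; last first.
  by have [->|/(pos y yps)/ltW//] := eqVneq (nu y) 0; rewrite mul0r.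
by apply/hasP; exists y0; rewrite ?y0ps ?pos.
Qed.

(** * Divided differences *)

Definition divdiff_coef ys y : R :=
  if y \in ys then (\prod_(z <- ys | z != y) (y - z))^-1 else 0.

Lemma prod_sub_neq0 ys y : \prod_(z <- ys | z != y) (y - z) != 0.
Proof.
by rewrite prodf_seq_neq0; apply/allP => z _; apply/implyP; rewrite subr_eq0 eq_sym.
Qed.

Lemma size_prod_XsubC_neq ys y : uniq ys -> y \in ys ->
  size (\prod_(z <- ys | z != y) ('X - z%:P)) = size ys.
Proof.
move=> uys ys_y; rewrite -big_filter size_prod_XsubC -rem_filter // size_rem //.
by case: ys ys_y {uys}.
Qed.

Lemma horner_prod_XsubC_neq ys y x :
  (\prod_(z <- ys | z != y) ('X - z%:P)).[x] = \prod_(z <- ys | z != y) (x - z).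
Proof. by rewrite horner_prod; apply: eq_bigr => z _; rewrite hornerXsubC. Qed.

Lemma lagrange_interp ys (P : {poly R}) : uniq ys -> (size P <= size ys)%N ->
  P = \sum_(y <- ys) (P.[y] * divdiff_coef ys y) *: \prod_(z <- ys | z != y) ('X - z%:P).
Proof.
move=> uys szP; apply/eqP; rewrite -subr_eq0; apply/eqP.
apply: (roots_geq_poly_eq0 _ uys).
  apply/allP => x ys_x; rewrite /root hornerD hornerN horner_sum (bigD1_seq x) //=.
  rewrite [\sum_(i <- ys | i != x) _]big1 ?addr0 => [|y yx]; last first.
    rewrite hornerZ horner_prod_XsubC_neq; apply/eqP; rewrite mulf_eq0 prodf_seq_eq0.
    by apply/orP; right; apply/hasP; exists x; rewrite // eq_sym yx subrr eqxx.
  rewrite hornerZ horner_prod_XsubC_neq /divdiff_coef ys_x -mulrA.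
  by rewrite mulVf ?prod_sub_neq0 // mulr1 subrr.
rewrite (leq_trans (size_polyD _ _)) // geq_max szP size_polyN big_seq.
apply: (big_ind (fun Q : {poly R} => size Q <= size ys)%N); rewrite ?size_poly0 //.
  by move=> Q1 Q2 h1 h2; rewrite (leq_trans (size_polyD _ _)) // geq_max h1 h2.
by move=> y ys_y; rewrite (leq_trans (size_scale_leq _ _)) // size_prod_XsubC_neq.
Qed.

Lemma moment_divdiff_coef ys n k : uniq ys -> size ys = n.+1 -> (k <= n)%N ->
  moment ys (divdiff_coef ys) k = (k == n)%:R.
Proof.
move=> uys szys kn.
have szX : (size ('X^k : {poly R}) <= size ys)%N by rewrite size_polyXn szys.
have /(congr1 (fun Q : {poly R} => Q`_n)) := lagrange_interp uys szX.
rewrite coefXn coef_sum eq_sym => ->; rewrite /moment !big_seq; apply: eq_bigr => y ys_y.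
have := lead_coef_prod_XsubC ys (fun z => z != y) id.
rewrite coefZ /lead_coef size_prod_XsubC_neq // szys => ->.
by rewrite hornerXn mulr1 mulrC.
Qed.

Lemma prod_sub_sign ys : sorted >%R ys ->
  alternates (fun b y => has_sign b (\prod_(z <- ys | z != y) (y - z))) true ys.
Proof.
elim: ys => //= a ys IH; rewrite (path_sortedE gtr_trans) => /andP[/allP ys_lt sys].
rewrite big_cons eqxx /= big_seq_cond prodr_gt0 /=; last first.
  by move=> z /andP[/ys_lt za _]; rewrite subr_gt0.
rewrite -[false]/(~~ true) -alternates_flip; apply: alternates_sub (IH sys) => y ys_y c.
by rewrite /= big_cons (gt_eqF (ys_lt y ys_y)) has_sign_nmull ?negbK // subr_lt0; apply: ys_lt.
Qed.

Lemma divdiff_coef_sign ys : sorted >%R ys ->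
  alternates (fun b y => has_sign b (divdiff_coef ys y)) true ys.
Proof.
move=> sys; apply: alternates_sub (prod_sub_sign sys) => y ys_y b.
by rewrite /divdiff_coef ys_y has_signV.
Qed.

(** * Convex combinations on the moment curve and their lifts *)

Lemma gamma_comb_coord n T l (i : 'I_1) (j : 'I_n) :
  (\sum_(t <- T) l t *: gamma R n t) i j = moment T l j.+1.
Proof. by rewrite summxE; apply: eq_bigr => t _; rewrite !mxE. Qed.

Lemma comb_in_conv n (f : R -> 'rV[R]_n) T l :
  {in T, forall t, 0 <= l t} -> \sum_(t <- T) l t = 1 ->
  conv_pts R n f T (\sum_(t <- T) l t *: f t).
Proof. by move=> l_ge0 l_sum1; exists l. Qed.

Lemma comb_is_height d T l :
  {in T, forall t, 0 <= l t} -> \sum_(t <- T) l t = 1 ->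
  is_height R d T (\sum_(t <- T) l t *: gamma R d t) (moment T l d.+1).
Proof.
move=> l_ge0 l_sum1; exists (\sum_(t <- T) l t *: gamma R d.+1 t).
split; first exact: comb_in_conv.
split; first by apply/matrixP => i j; rewrite mxE !gamma_comb_coord.
by rewrite /last_coord gamma_comb_coord.
Qed.

Lemma lt_lift_moments d S T l1 l2 : lt_lift R d S T ->
  {in S, forall t, 0 <= l1 t} -> {in T, forall t, 0 <= l2 t} ->
  \sum_(t <- S) l1 t = 1 -> \sum_(t <- T) l2 t = 1 ->
  (forall k, (0 < k <= d)%N -> moment S l1 k = moment T l2 k) ->
  moment S l1 d.+1 <= moment T l2 d.+1.
Proof.
move=> [_ below] l1_ge0 l2_ge0 l1_sum1 l2_sum1 mom.
have same_pt : \sum_(t <- S) l1 t *: gamma R d t = \sum_(t <- T) l2 t *: gamma R d t.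
  by apply/matrixP => i j; rewrite !gamma_comb_coord mom // ltn_ord.
apply: (below (\sum_(t <- S) l1 t *: gamma R d t)).
- exact: comb_in_conv.
- by rewrite same_pt; apply: comb_in_conv.
- exact: comb_is_height.
- by rewrite same_pt; apply: comb_is_height.
Qed.

Definition sign_compatible S T w : Prop :=
  forall b y, y \in (S `|` T)%fset -> has_sign b (w y) -> y \in (if b then S else T).

Lemma circuit_not_lt_lift d S T w : sign_compatible S T w ->
  (forall k, (k <= d)%N -> moment (S `|` T)%fset w k = 0) ->
  0 < moment (S `|` T)%fset w d.+1 -> ~ lt_lift R d S T.
Proof.
set U := (S `|` T)%fset => sgw mom0 top ltST.
pose a y := if 0 < w y then w y else 0.
pose b y := if w y < 0 then - w y else 0.
have a_ge0 y : 0 <= a y by rewrite /a; case: ifP => // /ltW.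
have b_ge0 y : 0 <= b y by rewrite /b; case: ifP => // /ltW; rewrite oppr_ge0.
have momab k : moment U w k = moment S a k - moment T b k.
  rewrite -(moment_fsub (fsubsetUl S T)).
    rewrite -(moment_fsub (fsubsetUr S T)).
      rewrite -momentB; apply: eq_bigr => y _; congr (_ * _).
      by rewrite /a /b; case: ltrgt0P; rewrite ?subr0 ?sub0r ?opprK.
    by move=> y yU; rewrite /b; case: ifP => // /(sgw false y yU) ->.
  by move=> y yU; rewrite /a; case: ifP => // /(sgw true y yU) ->.
have mom_eq k : (k <= d)%N -> moment S a k = moment T b k.
  by move=> kd; apply/eqP; rewrite -subr_eq0 -momab mom0.
set m := \sum_(t <- S) a t.
have m_gt0 : 0 < m.
  rewrite lt_def sumr_ge0 // andbT; apply: contraTneq top => m0.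
  have /eqP := m0; rewrite psumr_eq0 // => /allP a0.
  have /eqP := mom_eq 0%N isT; rewrite !moment0 -/m m0 eq_sym psumr_eq0 // => /allP b0.
  rewrite momab /moment !big_seq !big1 ?subrr ?ltxx // => y.
    by move=> /b0 /eqP ->; rewrite mul0r.
  by move=> /a0 /eqP ->; rewrite mul0r.
suff : moment S a d.+1 / m <= moment T b d.+1 / m.
  by rewrite ler_pM2r ?invr_gt0 // -subr_le0 -momab leNgt top.
rewrite -!moment_divl; apply: lt_lift_moments ltST _ _ _ _ _.
- by move=> t _; rewrite divr_ge0 // ltW.
- by move=> t _; rewrite divr_ge0 // ltW.
- by rewrite -mulr_suml divff // gt_eqF.
- by rewrite -mulr_suml -moment0 -mom_eq // moment0 divff // gt_eqF.
- by move=> k /andP[_ kd]; rewrite !moment_divl mom_eq.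
Qed.

Lemma overlap_dependence d S T : overlap R d S T ->
  exists nu, [/\ sign_compatible S T nu,
    forall k, (k <= d)%N -> moment (S `|` T)%fset nu k = 0 &
    has (fun y => nu y != 0) (S `|` T)%fset].
Proof.
move=> [_ /existsNP[p /not_implyP[[[l1 [l1_ge0 [l1_sum1 pS]]] [l2 [l2_ge0 [l2_sum1 pT]]]] pST]]].
set U := (S `|` T)%fset.
pose nu y := (if y \in S then l1 y else 0) - (if y \in T then l2 y else 0).
have momS k : moment U (fun y => if y \in S then l1 y else 0) k = moment S l1 k.
  rewrite (moment_fsub (fsubsetUl S T)).
    by apply: eq_big_seq => y ->.
  by move=> y _ /negbTE->.
have momT k : moment U (fun y => if y \in T then l2 y else 0) k = moment T l2 k.
  rewrite (moment_fsub (fsubsetUr S T)).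
    by apply: eq_big_seq => y ->.
  by move=> y _ /negbTE->.
exists nu; split.
- have ind_ge0 (A : {fset R}) l y :
      {in A, forall t, 0 <= l t} -> 0 <= (if y \in A then l y else 0).
    by move=> l_ge0; case: ifP => // /l_ge0.
  move=> [] y _; rewrite /nu /=; have := ind_ge0 _ _ y l1_ge0; have := ind_ge0 _ _ y l2_ge0.
    by case: (y \in S); case: (y \in T) => //= *; lra.
  by case: (y \in S); case: (y \in T) => //= *; lra.
- move=> [|k] kd; rewrite momentB momS momT; first by rewrite !moment0 l1_sum1 l2_sum1 subrr.
  by rewrite -!(gamma_comb_coord _ _ ord0 (Ordinal kd)) -pS -pT subrr.
rewrite -[has _ _]negbK -all_predC; apply/negP => /allP nu0.
have l1_out y : y \in S -> y \notin (S `&` T)%fset -> l1 y = 0.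
  rewrite in_fsetI => yS; rewrite yS /= => /negbTE yT; apply/eqP.
  by have := nu0 y; rewrite in_fsetU yS /= /nu yS yT subr0 negbK; apply.
have sumST (F : R -> 'rV[R]_d) :
    \sum_(t <- (S `&` T)%fset) l1 t *: F t = \sum_(t <- S) l1 t *: F t.
  by apply: big_fset_incl (fsubsetIl S T) _ => y /l1_out /[apply] ->; rewrite scale0r.
apply: pST; exists l1; split; first by move=> t /fsetIP[/l1_ge0].
split; last by rewrite pS sumST.
by rewrite (big_fset_incl _ (fsubsetIl S T)) // => y /l1_out /[apply].
Qed.

(** * Alternating chains and the order at the top difference *)

Definition fset_desc U : seq R := rev (sort <=%R U).

Lemma sorted_fset_desc U : sorted >%R (fset_desc U).
Proof.
rewrite rev_sorted [sorted _ _]lt_sorted_uniq_le sort_uniq fset_uniq sort_sorted //.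
exact: le_total.
Qed.

Lemma perm_fset_desc U : perm_eq (fset_desc U) U.
Proof. by rewrite perm_rev perm_sort. Qed.

Lemma drop_count_gt C x : sorted >%R C ->
  {in drop (count (fun c => x < c) C) C, forall y, y <= x}.
Proof.
elim: C => //= c C IH; rewrite (path_sortedE gtr_trans) => /andP[/allP Cc sC].
case: ltP => [xc|cx] y; first by rewrite add1n; apply: IH.
have -> : count (fun c => x < c) C = 0%N.
  apply/eqP; rewrite -leqn0 leqNgt -has_count; apply/hasPn => z /Cc zc.
  by rewrite -leNgt (le_trans (ltW zc)).
by rewrite drop0 inE => /predU1P[->//|/Cc yc]; rewrite (le_trans (ltW yc)).
Qed.

Lemma alternates_drop_below (P : bool -> pred R) e b C x :
  sorted >%R C -> alternates P e C -> ~~ P b x ->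
  exists2 m, (m <= (count (fun c => x < c)%R C).+1)%N &
    alternates P b (drop m C) /\ {in drop m C, forall y, y < x}.
Proof.
move=> sC altC Pbx; set m0 := count _ C.
have le_x := drop_count_gt (x := x) sC.
have sD := subseq_sorted gtr_trans (drop_subseq C m0) sC.
have altD := alternates_drop m0 altC.
have [Cm0|Cm0] := ltnP m0 (size C); last by exists m0 => //; rewrite drop_oversize.
have h_le : nth 0 C m0 <= x by apply: le_x; rewrite (drop_nth 0 Cm0) mem_head.
move: sD altD; rewrite (drop_nth 0 Cm0) /= (path_sortedE gtr_trans).
move=> /andP[/allP lt_h _] /andP[Ph alt].
have [eb|neb] := eqVneq (e (+) odd m0) b.
  exists m0 => //; rewrite (drop_nth 0 Cm0) -eb /= Ph alt; split=> // y.
  rewrite inE => /predU1P[->|/lt_h yh]; last exact: lt_le_trans yh h_le.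
  by rewrite lt_neqAle h_le andbT; apply: contraNneq Pbx => <-; rewrite -eb.
have nb : ~~ (e (+) odd m0) = b by move: neb; case: (e (+) odd m0); case: (b).
exists m0.+1 => //; rewrite -nb; split=> // y /lt_h yh; exact: lt_le_trans yh h_le.
Qed.

Definition nabove S y : nat := #|` [fset s in S | y < s]%fset|.

Definition fsign S y : R := if y \in S then (-1) ^+ nabove S y else 0.

Definition alt_chain S T (b : bool) s : bool :=
  sorted >%R s && alternates (fun c y => y \in if c then S else T) b s.

Lemma alt_chain_through_top S T x e C :
  (x \in S) != (x \in T) -> (forall y, x < y -> (y \in S) = (y \in T)) ->
  (x \in S) = ~~ odd (nabove S x) -> alt_chain S T e C ->
  exists2 N, alt_chain S T true N & (size C <= size N)%N.
Proof.
move=> xST agree parity /andP[sC altC].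
set A := fset_desc [fset s in S | x < s]%fset.
have memA y : (y \in A) = (y \in S) && (x < y).
  by rewrite (perm_mem (perm_fset_desc _)) !inE.
have szA : size A = nabove S x by rewrite (perm_size (perm_fset_desc _)).
have nx : ~~ (x \in if ~~ (x \in S) then S else T) by case xS: (x \in S) xST; rewrite /= ?xS.
have [m mle [altD ltD]] := alternates_drop_below sC altC nx.
exists (A ++ x :: drop m C); last first.
  suff cntA : (count (fun c => x < c)%R C <= size A)%N.
    have : (m <= (size A).+1)%N by rewrite (leq_trans mle) ?ltnS.
    by rewrite size_cat /= size_drop; lia.
  rewrite -size_filter uniq_leq_size ?filter_uniq ?(sorted_uniq gtr_trans gtr_irr) // => y.
  rewrite mem_filter memA => /andP[xy Cy]; rewrite xy andbT.
  by have [[]// yT] := alternates_mem altC Cy; rewrite agree.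
rewrite /alt_chain alternates_cat szA addTb -parity /=.
apply/and4P; split.
- rewrite !(sorted_pairwise gtr_trans) pairwise_cat /= -!(sorted_pairwise gtr_trans).
  rewrite (sorted_fset_desc _) (subseq_sorted gtr_trans (drop_subseq C m) sC) andbT.
  apply/and3P; split => //; last by apply/allP => y /ltD.
  apply/allrelP => a y; rewrite memA => /andP[_ xa]; rewrite inE => /predU1P[->//|/ltD yx].
  exact: lt_trans yx xa.
- by apply: alternates_both => y; rewrite memA => /andP[yS xy]; rewrite -agree ?yS.
- by case: ifP => [//|/negbT xS]; move: xST; rewrite (negbTE xS) => /negPn.
- exact: altD.
Qed.

Lemma alt_chain_not_lt_lift d S T N : alt_chain S T true N -> size N = d.+2 ->
  ~ lt_lift R d S T.
Proof.
move=> /andP[sN altN] szN; set U := (S `|` T)%fset.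
have uN : uniq N := sorted_uniq gtr_trans gtr_irr sN.
have NU : {subset N <= U}.
  by move=> y /(alternates_mem altN)[[] yST]; rewrite in_fsetU yST ?orbT.
have w0 y : y \notin N -> divdiff_coef N y = 0 by rewrite /divdiff_coef => /negbTE->.
have momU k : (k <= d.+1)%N -> moment U (divdiff_coef N) k = (k == d.+1)%:R.
  move=> kd; rewrite (moment_sub uN (fset_uniq U) NU) ?(moment_divdiff_coef uN szN) //.
  by move=> y _ /w0.
apply: (circuit_not_lt_lift (w := divdiff_coef N)) => [c y yU sgy||].
- have yN : y \in N by apply: contraTT (has_sign_neq0 sgy) => /w0->; rewrite eqxx.
  have [c' /andP[sgy' yc']] := alternates_mem (alternatesI (divdiff_coef_sign sN) altN) yN.
  by rewrite (has_sign_inj sgy sgy').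
- by move=> k kd; rewrite momU ?(leqW kd) // ltn_eqF.
- by rewrite momU // eqxx ltr0n.
Qed.

Lemma overlap_alt_chain d S T : overlap R d S T ->
  exists (e : bool) C, alt_chain S T e C /\ (d.+2 <= size C)%N.
Proof.
move=> /overlap_dependence[nu [sgnu mom0 nu_neq0]].
set U := (S `|` T)%fset; have permU := perm_fset_desc U.
have [||C [e [subC altC szC]]] := sign_chain_long (nu := nu) (n := d) (sorted_fset_desc U).
- by move=> k kd; rewrite -(mom0 k kd); apply: perm_big.
- by rewrite (eq_has_r (perm_mem permU)).
exists e, C; split => //; apply/andP; split.
  by apply: (subseq_sorted gtr_trans subC); apply: sorted_fset_desc.
apply: alternates_sub altC => y yC c; apply: sgnu.
by rewrite -(perm_mem permU); apply: (mem_subseq subC).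
Qed.

Lemma exists_top_difference S T : S != T ->
  exists x, (x \in S) != (x \in T) /\ forall y, x < y -> (y \in S) = (y \in T).
Proof.
move=> ST; set D := [seq y <- S ++ T | (y \in S) != (y \in T)].
have memD y : (y \in D) = ((y \in S) != (y \in T)).
  by rewrite mem_filter mem_cat andb_idr //; case: (y \in S); case: (y \in T).
have [y0 Dy0] : exists y, y \in D.
  apply: contrapT => noD; move/negP: ST; apply; apply/eqP/fsetP => y.
  by apply/eqP/negPn/negP => yST; apply: noD; exists y; rewrite memD.
set x := \big[Order.max/y0]_(y <- D) y.
have xD : x \in D.
  rewrite /x big_seq; apply: (big_ind (fun z => z \in D)) => //.
  by move=> u v uD vD; rewrite /Order.max; case: ifP.
exists x; split; first by rewrite -memD.
move=> y xy; apply/eqP; apply: contraTT xy; rewrite -memD -leNgt => yD.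
exact: le_bigmax_seq.
Qed.

Lemma nabove_agree S T x y : (forall z, x < z -> (z \in S) = (z \in T)) -> x <= y ->
  nabove S y = nabove T y.
Proof.
move=> agree xy; rewrite /nabove; congr (size (enum_fset _)); apply/fsetP => z.
by rewrite !inE; case: (ltP y z) => yz; rewrite ?andbT ?andbF // agree // (le_lt_trans xy yz).
Qed.

Lemma lt_lift_top_parity d S T x : lt_lift R d S T ->
  (x \in S) != (x \in T) -> (forall y, x < y -> (y \in S) = (y \in T)) ->
  (x \in S) = odd (nabove S x).
Proof.
move=> ltST xST agree; have [/eqP//|bad] := boolP ((x \in S) == odd (nabove S x)).
have parity : (x \in S) = ~~ odd (nabove S x) by move: bad; case: (x \in S); case: odd.
have [e [C [/(alt_chain_through_top xST agree parity)[N /andP[sN altN] szN] szC]]] :=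
  overlap_alt_chain ltST.1.
case: (alt_chain_not_lt_lift (N := take d.+2 N) _ _ ltST).
  rewrite /alt_chain alternates_take // andbT.
  by apply: (subseq_sorted gtr_trans (take_subseq N d.+2)).
by rewrite size_takel // (leq_trans szC).
Qed.

Lemma lt_lift_lex d S T : lt_lift R d S T -> lex_lt (fsign S) (fsign T).
Proof.
move=> ltST; have ST : S != T.
  by apply: contraPneq ltST => <- [[_ nsub] _]; apply: nsub => p [pS _]; rewrite fsetIid.
have [x [xST agree]] := exists_top_difference ST.
have parity := lt_lift_top_parity ltST xST agree.
exists x; split => [|y xy]; last by rewrite /fsign agree // (nabove_agree agree (ltW xy)).
rewrite /fsign -(nabove_agree agree (lexx x)) -signr_odd -parity.
by case: (x \in S) xST; case: (x \in T) => //= _; rewrite ?expr1 ?expr0 ?ltrN10 ?ltr01.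
Qed.

Lemma clos_lt_lift_lex d S T :
  clos_trans _ (lt_lift_simp R d) S T -> lex_lt (fsign S) (fsign T).
Proof.
elim=> [U V [_ [_ /lt_lift_lex]] // | U V W _ h1 _ h2]; exact: lex_lt_trans h1 h2.
Qed.

End MomentCurve.

Theorem lemma2p7 (R : realType) (d : nat) (hd : (0 < d)%N) :
  (forall S : {fset R}, is_simplex R d S -> prec_lift R d S S) /\
  (forall S T : {fset R}, is_simplex R d S -> is_simplex R d T ->
     prec_lift R d S T -> prec_lift R d T S -> S = T) /\
  (forall S T U : {fset R}, is_simplex R d S -> is_simplex R d T -> is_simplex R d U ->
     prec_lift R d S T -> prec_lift R d T U -> prec_lift R d S U).
Proof.
split; first by move=> S _; left.
split.
  move=> S T _ _ [->//|ST] [->//|TS]; exfalso.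
  exact: lex_lt_irr (clos_lt_lift_lex (t_trans _ _ _ _ _ ST TS)).
move=> S T U _ _ _ [->//|ST] [<-|TU]; first by right.
by right; apply: t_trans ST TU.
Qed.
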